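(* Let $T\subset U\subseteq S$, where $S$ is an arrangement of divisors on a variety $X$. Let $C$ be a component of $\bigcap_{D\in U}D$, let $p\in C$, and let $(U_1,U_2)$ be a splaying of $U$ at $p$. Suppose that $T\cap U_1$ and $T\cap U_2$ are both nonempty. Then $T$ is splayed at $p$ by $(T\cap U_1,T\cap U_2)$.
   Context: An arrangement of divisors on $X$ is a finite set of divisors such that the scheme-theoretic intersection of every subset is smooth. A splaying of a set $U$ of divisors at a point $p$ of their intersection is a decomposition $U=U_1\cup U_2$ with $U_1,U_2$ nonempty and $\bigcap_{D\in U_1}T_p(D)+\bigcap_{D\in U_2}T_p(D)=T_p(X)$; $U$ is then said to be splayed at $p$ by $(U_1,U_2)$. *)

From mathcomp Require Import all_boot all_algebra.
Set Implicit Arguments. Unset Strict Implicit. Unset Printing Implicit Defensive.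
Import GRing.Theory.
Local Open Scope ring_scope.

(* V plays the role of T_p(X) (= fullv); tp p D is the subspace T_p(D). *)
Section Splay.
Variables (k : fieldType) (V : vectType k) (I : finType) (P : Type).
Variable tp : P -> I -> {vspace V}.

Definition splayed_by (p : P) (U1 U2 : {set I}) : Prop :=
  [/\ U1 != set0, U2 != set0 &
      ((\bigcap_(D in U1) tp p D) + (\bigcap_(D in U2) tp p D) = fullv)%VS].

Definition splaying (p : P) (U U1 U2 : {set I}) : Prop :=
  U = U1 :|: U2 /\ splayed_by p U1 U2.
End Splay.

From mathcomp Require Import all_boot all_algebra.

(* Shrinking the two parts of a splaying only enlarges the two intersections of
   tangent spaces, so their sum stays all of T_p(X); and T ⊆ U = U1 ∪ U2 makes
   (T ∩ U1, T ∩ U2) a decomposition of T. *)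

Lemma bigcapvS (k : fieldType) (V : vectType k) (I : finType)
    (F : I -> {vspace V}) (A B : {set I}) :
  A \subset B -> (\bigcap_(i in B) F i <= \bigcap_(i in A) F i)%VS.
Proof.
move=> sAB; apply/subv_bigcapP => i iA.
exact: (bigcapv_inf i (subsetP sAB i iA)).
Qed.

Lemma splayed_by_subset (k : fieldType) (V : vectType k) (I : finType)
    (P : Type) (tp : P -> I -> {vspace V}) (p : P) (U1 U2 W1 W2 : {set I}) :
  splayed_by tp p U1 U2 -> W1 \subset U1 -> W2 \subset U2 ->
  W1 != set0 -> W2 != set0 -> splayed_by tp p W1 W2.
Proof.
move=> [_ _ sumU] sW1 sW2 nW1 nW2; split=> //.
apply/eqP; rewrite eqEsubv subvf /= -{1}sumU.
by apply: addvS; apply: bigcapvS.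
Qed.

Lemma setI_cover (I : finType) (T U1 U2 : {set I}) :
  T \subset U1 :|: U2 -> T = (T :&: U1) :|: (T :&: U2).
Proof. by move=> sTU; rewrite -setIUr; apply/esym/setIidPl. Qed.

Theorem lemma3p9 (k : fieldType) (V : vectType k) (I : finType) (P : Type)
  (onD : I -> P -> Prop) (tp : P -> I -> {vspace V})
  (S T U U1 U2 : {set I}) (p : P) :
  T \proper U -> U \subset S ->
  (forall D, D \in U -> onD D p) ->
  splaying tp p U U1 U2 ->
  T :&: U1 != set0 -> T :&: U2 != set0 ->
  splaying tp p T (T :&: U1) (T :&: U2).
Proof.
move=> /proper_sub sTU _ _ [defU splU] nT1 nT2; split.
  by apply: setI_cover; rewrite -defU.
exact: splayed_by_subset splU (subsetIr _ _) (subsetIr _ _) nT1 nT2.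
Qed.
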